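(* Let $i>0$, $1\le k_2\le5$, $1\le k_1\le6$, $1\le j\le4$, and let $P=\Omega_i\,I_{k_1}^{(i+4)}I_{k_2}^{(i+4)}D_j(i)$. Then there exist $1\le k_1',k_1''\le6$, $1\le k_2',k_2''\le5$ and $1\le j',j''\le4$ such that $$r_{(ii\to i\,i-1)}P\in\big\{I_{k_1'}^{(i-1)}I_{k_2'}^{(i)}D_{j'}(i+1),\ I_{k_1'}^{(i-1)}I_{k_2'}^{(i+4)}D_{j'}(i)\big\}$$ and $$r_{(ii\to i-1\,i)}P\in\big\{I_{k_1''}^{(i-1)}I_{k_2''}^{(i)}D_{j''}(i+1),\ I_{k_1''}^{(i-1)}I_{k_2''}^{(i+4)}D_{j''}(i)\big\}.$$
   Context: Words are finite sequences of integers; $\mathrm{ev}_a$ is the number of occurrences of $a$. For $b=a+1$ and a word with $(\mathrm{ev}_a,\mathrm{ev}_b)\in\{(1,2),(2,1)\}$, $\sigma_a$ replaces the subword of letters in $\{a,b\}$, keeping positions, via $aab\leftrightarrow abb$, $aba\leftrightarrow bba$, $baa\leftrightarrow bab$. Compositions act right to left, and operators act on pairs of words componentwise. $\Omega_i=\sigma_i\sigma_{i+1}\sigma_{i+2}\sigma_{i+3}$ (so $\sigma_{i+3}$ is applied first). For a word in which the letter $i$ occurs exactly twice, $r_{(ii\to c\,d)}$ replaces the first occurrence of $i$ by $c$ and the second by $d$. Insertion: $I_k^{(a)}(w_1\cdots w_n)=w_1\cdots w_{k-1}\,a\,w_k\cdots w_n$ ($1\le k\le n+1$). With $b=a+1$,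 $c=a+2$, $d=a+3$: $D_1(a)=(bacd,cabd)$, $D_2(a)=(dbac,dcab)$, $D_3(a)=(acdb,abdc)$, $D_4(a)=(cdba,bdca)$. *)

From mathcomp Require Import all_boot.

Set Implicit Arguments.
Unset Strict Implicit.
Unset Printing Implicit Defensive.

Definition word := seq nat.
Definition wpair := (word * word)%type.

Definition ev (a : nat) (w : word) : nat := count_mem a w.

Definition sigma_sub (a b : nat) (s : word) : word :=
  if s == [:: a; a; b] then [:: a; b; b]
  else if s == [:: a; b; b] then [:: a; a; b]
  else if s == [:: a; b; a] then [:: b; b; a]
  else if s == [:: b; b; a] then [:: a; b; a]
  else if s == [:: b; a; a] then [:: b; a; b]
  else if s == [:: b; a; b] then [:: b; a; a]
  else s.

Fixpoint refill (a b : nat) (w t : word) : word :=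
  match w with
  | [::] => [::]
  | x :: w' =>
    if (x == a) || (x == b) then
      match t with
      | y :: t' => y :: refill a b w' t'
      | [::] => x :: refill a b w' [::]
      end
    else x :: refill a b w' t
  end.

Definition sigma (a : nat) (w : word) : option word :=
  let b := a.+1 in
  if ((ev a w == 1) && (ev b w == 2)) || ((ev a w == 2) && (ev b w == 1)) then
    Some (refill a b w (sigma_sub a b [seq x <- w | (x == a) || (x == b)]))
  else None.

Definition onpair (f : word -> option word) (p : wpair) : option wpair :=
  match f p.1, f p.2 with
  | Some x, Some y => Some (x, y)
  | _, _ => None
  end.

Definition obind (f : wpair -> option wpair) (o : option wpair) : option wpair :=
  match o with Some p => f p | None => None end.

(* Omega_i = sigma_i sigma_{i+1} sigma_{i+2} sigma_{i+3} (sigma_{i+3} first) *)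
Definition Omega (i : nat) (p : wpair) : option wpair :=
  obind (onpair (sigma i))
    (obind (onpair (sigma (i + 1)))
      (obind (onpair (sigma (i + 2)))
        (onpair (sigma (i + 3)) p))).

Fixpoint repl2 (i c d : nat) (w : word) : word :=
  match w with
  | [::] => [::]
  | x :: w' => if x == i then c :: [seq (if y == i then d else y) | y <- w']
               else x :: repl2 i c d w'
  end.

Definition rr (i c d : nat) (w : word) : option word :=
  if ev i w == 2 then Some (repl2 i c d w) else None.

Definition rP (i c d : nat) (p : wpair) : option wpair := onpair (rr i c d) p.

Definition ins (k a : nat) (w : word) : word := take k.-1 w ++ a :: drop k.-1 w.
Definition insP (k a : nat) (p : wpair) : wpair := (ins k a p.1, ins k a p.2).

(* D_1..D_4 (j outside 1..4 is never used) *)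
Definition D (j a : nat) : wpair :=
  let b := a + 1 in let c := a + 2 in let d := a + 3 in
  match j with
  | 1 => ([:: b; a; c; d], [:: c; a; b; d])
  | 2 => ([:: d; b; a; c], [:: d; c; a; b])
  | 3 => ([:: a; c; d; b], [:: a; b; d; c])
  | _ => ([:: c; d; b; a], [:: b; d; c; a])
  end.

From mathcomp Require Import all_boot.

(* Every operator in the statement only compares letters for equality and
   with their successors, so all of them commute with the translation of the
   alphabet by s.  Translating by i - 1 therefore reduces the statement to
   i = 1, where it is a finite check over the 6 * 5 * 4 choices of
   (k1, k2, j), carried out by computation. *)

Definition map_pair (h : word -> word) (p : wpair) : wpair := (h p.1, h p.2).

Lemma onpair_map_pair (h : word -> word) (f g : word -> option word) p :
    (forall w, f (h w) = omap h (g w)) ->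
  onpair f (map_pair h p) = omap (map_pair h) (onpair g p).
Proof.
move=> fgh; rewrite /onpair /map_pair /= !fgh.
by case: (g p.1) => [x|] //=; case: (g p.2).
Qed.

Lemma ins_map (f : nat -> nat) k a w : ins k (f a) (map f w) = map f (ins k a w).
Proof. by rewrite /ins map_cat /= map_take map_drop. Qed.

Section InjectiveRelabelling.

Context {f : nat -> nat} (f_inj : injective f).

Lemma ev_map a w : ev (f a) (map f w) = ev a w.
Proof. by rewrite /ev count_map; apply: eq_count => x; rewrite /= (inj_eq f_inj). Qed.

Lemma filter2_map a b w :
  [seq x <- map f w | (x == f a) || (x == f b)] =
  map f [seq x <- w | (x == a) || (x == b)].
Proof. by rewrite filter_map; congr map; apply: eq_filter => x; rewrite /= !(inj_eq f_inj). Qed.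

Lemma sigma_sub_map a b t : sigma_sub (f a) (f b) (map f t) = map f (sigma_sub a b t).
Proof.
have map_f_eq (u : word) : (map f t == map f u) = (t == u).
  exact/inj_eq/inj_map.
rewrite /sigma_sub.
rewrite -[[:: f a; f a; f b]]/(map f [:: a; a; b]) -[[:: f a; f b; f b]]/(map f [:: a; b; b]).
rewrite -[[:: f a; f b; f a]]/(map f [:: a; b; a]) -[[:: f b; f b; f a]]/(map f [:: b; b; a]).
rewrite -[[:: f b; f a; f a]]/(map f [:: b; a; a]) -[[:: f b; f a; f b]]/(map f [:: b; a; b]).
by rewrite !map_f_eq; repeat case: ifP.
Qed.

Lemma refill_map a b w t : refill (f a) (f b) (map f w) (map f t) = map f (refill a b w t).
Proof.
elim: w t => [|x w IHw] t //=; rewrite !(inj_eq f_inj).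
case: ifP => _; last by rewrite IHw.
by case: t => [|y t] /=; rewrite -IHw.
Qed.

Lemma repl2_map a c d w : repl2 (f a) (f c) (f d) (map f w) = map f (repl2 a c d w).
Proof.
elim: w => [|x w IHw] //=; rewrite (inj_eq f_inj); case: ifP => _; last by rewrite IHw.
congr (_ :: _); rewrite -map_comp -[RHS]/(map f _) -map_comp; apply: eq_map => y /=.
by rewrite (inj_eq f_inj); case: ifP.
Qed.

Lemma rr_map a c d w : rr (f a) (f c) (f d) (map f w) = omap (map f) (rr a c d w).
Proof. by rewrite /rr ev_map repl2_map; case: ifP. Qed.

End InjectiveRelabelling.

Section Translation.

Variable s : nat.

Definition shift : word -> word := map (addn^~ s).
Definition shiftP : wpair -> wpair := map_pair shift.

Let shift_inj : injective (addn^~ s) := @addIn s.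

Lemma sigma_shift a w : sigma (a + s) (shift w) = omap shift (sigma a w).
Proof.
rewrite /sigma -addSn !(ev_map shift_inj).
case: ifP => //= _.
by rewrite (filter2_map shift_inj) (sigma_sub_map shift_inj) (refill_map shift_inj).
Qed.

Lemma onpair_sigma_shift a p :
  onpair (sigma (a + s)) (shiftP p) = omap shiftP (onpair (sigma a) p).
Proof. exact/onpair_map_pair/sigma_shift. Qed.

Lemma Omega_shift a p : Omega (a + s) (shiftP p) = omap shiftP (Omega a p).
Proof.
rewrite /Omega !(addnAC a s) onpair_sigma_shift.
case: (onpair (sigma (a + 3)) p) => [q|] //=; rewrite onpair_sigma_shift.
case: (onpair (sigma (a + 2)) q) => [q'|] //=; rewrite onpair_sigma_shift.
case: (onpair (sigma (a + 1)) q') => [q''|] //=; rewrite onpair_sigma_shift.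
by case: (onpair (sigma a) q'').
Qed.

Lemma rP_shift a c d p : rP (a + s) (c + s) (d + s) (shiftP p) = omap shiftP (rP a c d p).
Proof. exact/onpair_map_pair/(rr_map shift_inj). Qed.

Lemma insP_shift k a p : insP k (a + s) (shiftP p) = shiftP (insP k a p).
Proof. by rewrite /insP /shiftP /map_pair /shift /= !(ins_map (addn^~ s)). Qed.

Lemma D_shift j a : D j (a + s) = shiftP (D j a).
Proof. by rewrite /D /shiftP /map_pair /shift !(addnAC a s); case: j => [|[|[|[|?]]]]. Qed.

End Translation.

Definition lemma21_target (i : nat) (Q : option wpair) : Prop :=
  exists k1 k2 j, [/\ 1 <= k1 <= 6, 1 <= k2 <= 5, 1 <= j <= 4 &
    Q = Some (insP k1 i.-1 (insP k2 i (D j (i + 1)))) \/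
    Q = Some (insP k1 i.-1 (insP k2 (i + 4) (D j i)))].

Definition lemma21_conclusion (i k1 k2 j : nat) : Prop :=
  exists P : wpair,
    Omega i (insP k1 (i + 4) (insP k2 (i + 4) (D j i))) = Some P /\
    lemma21_target i (rP i i i.-1 P) /\ lemma21_target i (rP i i.-1 i P).

Lemma predn_addn i s : 0 < i -> (i + s).-1 = i.-1 + s.
Proof. by case: i. Qed.

Lemma lemma21_target_shift i s Q :
  0 < i -> lemma21_target i Q -> lemma21_target (i + s) (omap (shiftP s) Q).
Proof.
move=> i_gt0 [k1 [k2 [j [hk1 hk2 hj hQ]]]]; exists k1, k2, j; split => //.
rewrite predn_addn // !(addnAC i s) !(D_shift s) !(insP_shift s).
by case: hQ => ->; [left | right].
Qed.

Lemma lemma21_conclusion_shift i s k1 k2 j :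
  0 < i -> lemma21_conclusion i k1 k2 j -> lemma21_conclusion (i + s) k1 k2 j.
Proof.
move=> i_gt0 [P [hP [h1 h2]]]; exists (shiftP s P); split.
  by rewrite addnAC D_shift !insP_shift Omega_shift hP.
by rewrite predn_addn // !rP_shift; split; apply: lemma21_target_shift.
Qed.

Definition lemma21_targetb (i : nat) (Q : option wpair) : bool :=
  has (fun k1 => has (fun k2 => has (fun j =>
    (Q == Some (insP k1 i.-1 (insP k2 i (D j (i + 1))))) ||
    (Q == Some (insP k1 i.-1 (insP k2 (i + 4) (D j i)))))
  (iota 1 4)) (iota 1 5)) (iota 1 6).

Lemma lemma21_targetbP i Q : lemma21_targetb i Q -> lemma21_target i Q.
Proof.
case/hasP=> k1; rewrite mem_iota => hk1; case/hasP=> k2; rewrite mem_iota => hk2.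
case/hasP=> j; rewrite mem_iota => hj /orP hQ.
by exists k1, k2, j; split => //; case: hQ => /eqP; [left | right].
Qed.

Definition lemma21_conclusionb (i k1 k2 j : nat) : bool :=
  if Omega i (insP k1 (i + 4) (insP k2 (i + 4) (D j i))) is Some P then
    lemma21_targetb i (rP i i i.-1 P) && lemma21_targetb i (rP i i.-1 i P)
  else false.

Lemma lemma21_conclusionbP i k1 k2 j :
  lemma21_conclusionb i k1 k2 j -> lemma21_conclusion i k1 k2 j.
Proof.
rewrite /lemma21_conclusionb; case hP: Omega => [P|] // /andP[h1 h2].
by exists P; split => //; split; apply: lemma21_targetbP.
Qed.

Lemma lemma21_conclusionb_at1 :
  all (fun k1 => all (fun k2 => all (lemma21_conclusionb 1 k1 k2)
    (iota 1 4)) (iota 1 5)) (iota 1 6).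
Proof. by vm_compute. Qed.

Lemma lemma21_conclusion_at1 k1 k2 j :
  1 <= k2 <= 5 -> 1 <= k1 <= 6 -> 1 <= j <= 4 -> lemma21_conclusion 1 k1 k2 j.
Proof.
move=> hk2 hk1 hj; apply: lemma21_conclusionbP.
have /allP/(_ k1) := lemma21_conclusionb_at1; rewrite mem_iota => /(_ hk1).
move=> /allP/(_ k2); rewrite mem_iota => /(_ hk2).
by move=> /allP/(_ j); rewrite mem_iota => /(_ hj).
Qed.

Theorem lemma21 (i k1 k2 j : nat) :
  0 < i -> 1 <= k2 <= 5 -> 1 <= k1 <= 6 -> 1 <= j <= 4 ->
  exists P : wpair,
    Omega i (insP k1 (i + 4) (insP k2 (i + 4) (D j i))) = Some P /\
    (exists k1' k2' j', [/\ 1 <= k1' <= 6, 1 <= k2' <= 5, 1 <= j' <= 4 &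
       rP i i i.-1 P = Some (insP k1' i.-1 (insP k2' i (D j' (i + 1)))) \/
       rP i i i.-1 P = Some (insP k1' i.-1 (insP k2' (i + 4) (D j' i)))]) /\
    (exists k1'' k2'' j'', [/\ 1 <= k1'' <= 6, 1 <= k2'' <= 5, 1 <= j'' <= 4 &
       rP i i.-1 i P = Some (insP k1'' i.-1 (insP k2'' i (D j'' (i + 1)))) \/
       rP i i.-1 i P = Some (insP k1'' i.-1 (insP k2'' (i + 4) (D j'' i)))]).
Proof.
case: i => // s _ hk2 hk1 hj; rewrite -(add1n s).
by apply: lemma21_conclusion_shift => //; apply: lemma21_conclusion_at1.
Qed.
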